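(* Let $H$ be an $m\times n$ binary parity-check matrix with Tanner graph $G$, let $\underline\gamma\in\mathbb R^n$, and let $\underline x$ be the (unique) optimal solution of the LP decoding problem $\min\{\underline\gamma^T\underline x:\underline x\in\mathscr P\}$, where $\mathscr P$ is the fundamental polytope. Let $F$ be the fractional subgraph of $G$ at $\underline x$, written as the disjoint union of its connected components (clusters) $F_1,\dots,F_K$. Then each cluster $F_i$ contains a cycle.
   Context: The Tanner graph $G$ of $H$ is the bipartite graph with variable nodes $1,\dots,n$, check nodes $1,\dots,m$, and an edge between check $j$ and variable $i$ iff $H_{ji}=1$; $N(j)$ is the set of variable nodes adjacent to check $j$. The fundamental polytope $\mathscr P$ is the set of $\underline x\in[0,1]^n$ such that for every $j$ and every odd-sized $V\subseteq N(j)$, $\sum_{i\in V}x_i-\sum_{i\in N(j)\setminus V}x_i\le |V|-1$. The fractional subgraph $F$ at $\underline x$ is the subgraph of $G$ consisting of the variable nodes $i$ with $0<x_i<1$, the check nodes adjacent to them, and all edges between these nodes. *)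

From HB Require Import structures.
From mathcomp Require Import all_boot all_order all_algebra.
Set Implicit Arguments. Unset Strict Implicit. Unset Printing Implicit Defensive.
Import Order.TTheory GRing.Theory Num.Theory.
Local Open Scope ring_scope.

(* Tanner graph of a binary m x n parity-check matrix H (entries in bool).
   Vertices: inl i = variable node i, inr j = check node j. *)
Definition tanner_vertex (m n : nat) : finType := ('I_n + 'I_m)%type.

Definition tanner_adj (m n : nat) (H : 'M[bool]_(m, n)) :
  rel (tanner_vertex m n) :=
  fun u v => match u, v with
  | inl i, inr j => H j i
  | inr j, inl i => H j i
  | _, _ => false
  end.

Definition nbhd (m n : nat) (H : 'M[bool]_(m, n)) (j : 'I_m) : {set 'I_n} :=
  [set i | H j i].

Definition in_fund_polytope (R : realFieldType) (m n : nat)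
  (H : 'M[bool]_(m, n)) (x : 'I_n -> R) : Prop :=
  (forall i, 0 <= x i <= 1) /\
  (forall (j : 'I_m) (V : {set 'I_n}), V \subset nbhd H j -> odd #|V| ->
     \sum_(i in V) x i - \sum_(i in nbhd H j :\: V) x i <= #|V|%:R - 1).

Definition lp_cost (R : realFieldType) (n : nat) (g x : 'I_n -> R) : R :=
  \sum_(i < n) g i * x i.

Definition unique_lp_optimum (R : realFieldType) (m n : nat)
  (H : 'M[bool]_(m, n)) (g x : 'I_n -> R) : Prop :=
  [/\ in_fund_polytope H x,
      (forall y, in_fund_polytope H y -> lp_cost g x <= lp_cost g y)
    & (forall y, in_fund_polytope H y -> lp_cost g y = lp_cost g x ->
         forall i, y i = x i)].

Definition frac_vertex (R : realFieldType) (m n : nat)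
  (H : 'M[bool]_(m, n)) (x : 'I_n -> R) (v : tanner_vertex m n) : bool :=
  match v with
  | inl i => (0 < x i) && (x i < 1)
  | inr j => [exists i, H j i && ((0 < x i) && (x i < 1))]
  end.

Definition frac_adj (R : realFieldType) (m n : nat)
  (H : 'M[bool]_(m, n)) (x : 'I_n -> R) : rel (tanner_vertex m n) :=
  fun u v => [&& frac_vertex H x u, frac_vertex H x v & tanner_adj H u v].

Definition cluster_has_cycle (R : realFieldType) (m n : nat)
  (H : 'M[bool]_(m, n)) (x : 'I_n -> R) (v : tanner_vertex m n) : Prop :=
  exists s : seq (tanner_vertex m n),
    [/\ (3 <= size s)%N, uniq s, cycle (frac_adj H x) s
      & all (fun w => connect (frac_adj H x) v w) s].

From HB Require Import structures.
From mathcomp Require Import all_boot all_order all_algebra.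
From mathcomp Require Import zify ring lra.
Set Implicit Arguments. Unset Strict Implicit. Unset Printing Implicit Defensive.
Import Order.TTheory GRing.Theory Num.Theory.

(* Let W be the variable nodes of the cluster and C its check nodes carrying a
   tight parity constraint. Two tight constraints at the same check agree or are
   opposite on all fractional coordinates, so if #|W| > #|C| a nonzero direction
   d supported on W and orthogonal to one tight constraint per check of C is
   orthogonal to all tight constraints; then x +- eps d are both feasible,
   contradicting the uniqueness of the optimum. Hence #|W| <= #|C|. A tight
   constraint cannot have exactly one fractional neighbour, so every check of C
   has two neighbours in W, and the bipartite graph on W and C has at least as
   many edges as vertices: it contains a cycle. *)

Lemma sum_nat_card (T : finType) (A : {set T}) (b : pred T) :
  \sum_(w in A) b w = #|[set w in A | b w]|.
Proof.
rewrite -sum1_card big_mkcond [RHS]big_mkcond /=.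
by apply: eq_bigr => w _; rewrite inE; case: (w \in A); case: (b w).
Qed.

Section Cycles.
Variables (T : finType) (e : rel T).

Definition has_cycle_in (X : {set T}) := exists s : seq T,
  [/\ 3 <= size s, uniq s, cycle e s & {subset s <= X}].

Definition deg_in (X : {set T}) u := #|[set w in X | e u w]|.

Definition simple_path_in (X : {set T}) u p :=
  [/\ uniq (u :: p), path e u p & {subset u :: p <= X}].

Lemma has_cycle_in_sub (X Y : {set T}) :
  X \subset Y -> has_cycle_in X -> has_cycle_in Y.
Proof.
by move=> /subsetP sXY [s [s3 us cs sX]]; exists s; split=> // z /sX /sXY.
Qed.

Lemma chord_cycle (X : {set T}) u a q w :
  simple_path_in X u (a :: q) -> w \in q -> e w u -> has_cycle_in X.
Proof.
move=> + wq; case/splitPr: wq => q1 q2 [+ + sX] ewu.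
rewrite -cat_cons -cat_rcons -cat_cons cat_uniq cat_path => /andP[uq _] /andP[pq _].
exists (u :: rcons (a :: q1) w); split.
- by rewrite /= size_rcons.
- exact: uq.
- by rewrite /cycle rcons_path pq last_rcons ewu.
- by move=> z zs; apply: sX; rewrite -cat_cons -cat_rcons -cat_cons mem_cat zs.
Qed.

Lemma neighbor_avoiding (X : {set T}) u a : 1 < deg_in X u ->
  exists w, [/\ w \in X, e u w & w != a].
Proof.
move=> /card_gt1P[w1 [w2 [+ + w12]]]; rewrite !inE => /andP[X1 e1] /andP[X2 e2].
have [<-|w1a] := eqVneq w1 a; last by exists w1.
by exists w2; rewrite eq_sym.
Qed.

Hypotheses (e_sym : symmetric e) (e_irr : irreflexive e).

Lemma simple_path_extend (X : {set T}) u p :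
  (forall z, z \in X -> 1 < deg_in X z) -> simple_path_in X u p ->
  has_cycle_in X \/ exists w, simple_path_in X w (u :: p).
Proof.
move=> degX [uq pq sX].
have [w [wX euw wa]] := neighbor_avoiding (head u p) (degX u (sX u (mem_head u p))).
have [wp|wp] := boolP (w \in u :: p); last first.
  right; exists w; split.
  - by rewrite cons_uniq wp uq.
  - by rewrite /= e_sym euw.
  - by move=> z; rewrite inE => /predU1P[->|/sX].
left; have wu : w != u by apply: contraTneq euw => ->; rewrite e_irr.
case: p uq pq sX wa wp => [|a q] uq pq sX wa; rewrite !inE (negbTE wu) //=.
rewrite (negbTE wa) /= => wq.
by apply: (@chord_cycle X u a q w) => //; rewrite e_sym.
Qed.

Lemma min_degree_cycle (X : {set T}) : 0 < #|X| ->
  (forall z, z \in X -> 1 < deg_in X z) -> has_cycle_in X.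
Proof.
move=> /card_gt0P[u0 u0X] degX.
(* No simple path has #|T|.+1 vertices. *)
suff [//|[u [p [szp [uq _ _]]]]] :
    has_cycle_in X \/ exists u p, size p = #|T| /\ simple_path_in X u p.
  by have := max_card (mem (u :: p)); rewrite (card_uniqP uq) /= szp ltnn.
elim: #|T| => [|k [|[u [p [szp sp]]]]].
- by right; exists u0, [::]; split=> //; split=> // z; rewrite inE => /eqP->.
- by left.
have [|[w spw]] := simple_path_extend degX sp; first by left.
by right; exists w, (u :: p); rewrite /= szp.
Qed.

Lemma deg_in_le_card (X : {set T}) u : deg_in X u <= #|X|.
Proof. by apply/subset_leq_card/subsetP => w; rewrite inE => /andP[]. Qed.

Lemma deg_in_setD1 (X : {set T}) u : deg_in X u = deg_in (X :\ u) u.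
Proof.
apply: eq_card => w; rewrite !inE.
by case: eqVneq => [->|]; rewrite ?e_irr ?andbF.
Qed.

Lemma degree_sum_setD1 (X : {set T}) u : u \in X ->
  \sum_(w in X) deg_in X w =
  \sum_(w in X :\ u) deg_in (X :\ u) w + (deg_in X u).*2.
Proof.
move=> uX; rewrite (big_setD1 u uX) /=.
have deg_split w : w \in X :\ u -> deg_in X w = deg_in (X :\ u) w + e w u.
  move=> _; rewrite /deg_in (cardsD1 u) inE uX addnC; congr (_ + _).
  by apply: eq_card => z; rewrite !inE andbA.
rewrite (eq_bigr _ deg_split) big_split /= sum_nat_card -addnn.
suff ->: #|[set w in X :\ u | e w u]| = deg_in X u by rewrite addnCA addnA.
by rewrite deg_in_setD1; apply: eq_card => w; rewrite !inE e_sym.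
Qed.

Lemma degree_sum_cycle (X : {set T}) : 0 < #|X| ->
  #|X|.*2 <= \sum_(u in X) deg_in X u -> has_cycle_in X.
Proof.
move Hk: #|X| => k; elim: k X Hk => [|k IH] X cardX // _ degsum.
have [/forall_inP deg2|] := boolP [forall u in X, 1 < deg_in X u].
  by apply: min_degree_cycle => //; rewrite cardX.
rewrite negb_forall_in => /existsP[u /andP[uX]]; rewrite -leqNgt => deg1.
have cardXu : #|X :\ u| = k by move: (cardsD1 u X); rewrite uX cardX => -[].
have degXu := deg_in_le_card (X :\ u) u; rewrite -deg_in_setD1 cardXu in degXu.
move: degsum; rewrite (degree_sum_setD1 uX) => degsum.
have k_gt0 : 0 < k.
  rewrite lt0n; apply: contraTneq degsum => k0.
  have /cards0_eq -> : #|X :\ u| = 0 by rewrite cardXu k0.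
  rewrite big_set0; lia.
apply: (has_cycle_in_sub (subD1set X u)); apply: IH => //; lia.
Qed.
End Cycles.

Section Bipartite.
Variables (T1 T2 : finType) (e : rel (T1 + T2)).
Hypothesis e_sym : symmetric e.
Hypotheses (e_ll : forall a a', ~~ e (inl a) (inl a'))
           (e_rr : forall b b', ~~ e (inr b) (inr b')).

Definition sum_set (A : {set T1}) (B : {set T2}) : {set T1 + T2} :=
  [set u | match u with inl a => a \in A | inr b => b \in B end].

Variables (A : {set T1}) (B : {set T2}).

Lemma card_sum_set : #|sum_set A B| = #|A| + #|B|.
Proof.
by rewrite -!sum1_card big_sumType; congr (_ + _); apply: eq_bigl => ?; rewrite inE.
Qed.

Lemma deg_in_inl a :
  deg_in e (sum_set A B) (inl a) = #|[set b in B | e (inl a) (inr b)]|.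
Proof.
rewrite /deg_in -!sum_nat_card big_sumType big1 ?add0n; last first.
  by move=> a' _; rewrite (negbTE (e_ll _ _)).
by apply: eq_bigl => b; rewrite inE.
Qed.

Lemma deg_in_inr b :
  deg_in e (sum_set A B) (inr b) = #|[set a in A | e (inr b) (inl a)]|.
Proof.
rewrite /deg_in -!sum_nat_card big_sumType /= addnC big1 ?add0n; last first.
  by move=> b' _; rewrite (negbTE (e_rr _ _)).
by apply: eq_bigl => a; rewrite inE.
Qed.

Lemma degree_sum_sum_set :
  \sum_(u in sum_set A B) deg_in e (sum_set A B) u =
  (\sum_(b in B) deg_in e (sum_set A B) (inr b)).*2.
Proof.
rewrite big_sumType -addnn; congr (_ + _); last by apply: eq_bigl => b; rewrite inE.
rewrite (eq_bigl (mem A)); last by move=> a; rewrite inE.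
under eq_bigr do rewrite deg_in_inl -sum_nat_card.
rewrite exchange_big; apply: eq_bigr => b _.
by rewrite deg_in_inr -sum_nat_card; apply: eq_bigr => a _; rewrite e_sym.
Qed.

Lemma bipartite_cycle : 0 < #|A| -> #|A| <= #|B| ->
  (forall b, b \in B -> 2 <= deg_in e (sum_set A B) (inr b)) ->
  has_cycle_in e (sum_set A B).
Proof.
move=> A_gt0 le_AB deg2.
have e_irr : irreflexive e by case=> ?; rewrite (negbTE (e_ll _ _), negbTE (e_rr _ _)).
apply: degree_sum_cycle => //; rewrite card_sum_set ?degree_sum_sum_set; first lia.
have : #|B|.*2 <= \sum_(b in B) deg_in e (sum_set A B) (inr b).
  by rewrite -muln2 -sum_nat_const; apply: leq_sum.
lia.
Qed.
End Bipartite.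

Local Open Scope ring_scope.

Lemma odd_card_symdiff (T : finType) (A B : {set T}) :
  odd #|(A :\: B) :|: (B :\: A)| = odd #|A| (+) odd #|B|.
Proof.
have disj : (A :\: B) :&: (B :\: A) = set0.
  by apply/setP => z; rewrite !inE; case: (z \in A); case: (z \in B).
rewrite cardsU disj cards0 subn0 -(cardsID B A) -(cardsID A B) setIC !oddD.
by case: (odd _); case: (odd _); case: (odd _).
Qed.

Lemma underdetermined_system (F : fieldType) (I : finType) (P : {pred I}) n
    (a : I -> 'I_n -> F) :
  (#|P| < n)%N -> exists d : 'I_n -> F,
    (exists i, d i != 0) /\ (forall c, c \in P -> \sum_i a c i * d i = 0).
Proof.
move=> ltPn; pose A := \matrix_(k < #|P|, i < n) a (enum_val k) i.
have : kermx A^T != 0.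
  rewrite -mxrank_eq0 mxrank_ker subn_eq0 -ltnNge mxrank_tr.
  exact: leq_ltn_trans (rank_leq_row A) ltPn.
case/rowV0Pn => v /sub_kermxP vA /rV0Pn nz.
exists (fun i => v 0 i); split=> // c Pc.
have /matrixP/(_ 0 (enum_rank_in Pc c)) := vA; rewrite !mxE => vAc.
rewrite -[RHS]vAc; apply: eq_bigr => i _; by rewrite !mxE enum_rankK_in // mulrC.
Qed.

Lemma exists_pos_lower_bound (R : realFieldType) (I : finType) (P : pred I)
    (f : I -> R) :
  (forall c, P c -> 0 < f c) -> exists2 r : R, 0 < r & forall c, P c -> r <= f c.
Proof.
move=> f_gt0; pose S := \sum_(c | P c) (f c)^-1.
have S_ge0 : 0 <= S by apply: sumr_ge0 => c /f_gt0; rewrite invr_ge0 => /ltW.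
exists (1 + S)^-1 => [|c Pc]; first by rewrite invr_gt0; lra.
have fc_gt0 := f_gt0 c Pc.
rewrite -[f c]invrK lef_pV2 ?posrE ?invr_gt0 ?ltr_wpDr //.
rewrite /S (bigD1 c) //= addrCA lerDl addr_ge0 //.
by apply: sumr_ge0 => i /andP[/f_gt0]; rewrite invr_ge0 => /ltW.
Qed.

Section FundamentalPolytope.
Variables (R : realFieldType) (m n : nat) (H : 'M[bool]_(m, n)).
Implicit Types (x z d : 'I_n -> R) (j : 'I_m) (V : {set 'I_n}).

Definition fractional x i := (0 < x i) && (x i < 1).

Definition sgn_in V i : R := if i \in V then 1 else -1.

Definition check_form j V z := \sum_(i in nbhd H j) sgn_in V i * z i.

Definition tight x j V :=
  [&& V \subset nbhd H j, odd #|V| & check_form j V x == #|V|%:R - 1].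

(* The distance from x i to the i-th bit of the indicator of V: the constraint
   (j, V) of the polytope says that these distances sum to at least 1 on N(j). *)
Definition pattern_dist x V i := if i \in V then 1 - x i else x i.

Lemma check_formE j V z : V \subset nbhd H j ->
  check_form j V z = \sum_(i in V) z i - \sum_(i in nbhd H j :\: V) z i.
Proof.
move=> sV; rewrite /check_form (big_setID V) /= (setIidPr sV) -sumrN.
by congr (_ + _); apply: eq_bigr => i; rewrite ?inE /sgn_in;
  [move=> -> | case/andP=> /negbTE ->]; rewrite ?mul1r ?mulN1r.
Qed.

Lemma check_form_lin j V x d t :
  check_form j V (fun i => x i + t * d i) = check_form j V x + t * check_form j V d.
Proof. by rewrite /check_form mulr_sumr -big_split; apply: eq_bigr => i _ /=; ring. Qed.

Lemma check_form_pattern_dist j V x : V \subset nbhd H j ->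
  check_form j V x = #|V|%:R - \sum_(i in nbhd H j) pattern_dist x V i.
Proof.
move=> sV; apply/eqP; rewrite eq_sym subr_eq -big_split /=.
rewrite (eq_bigr (fun i => (i \in V)%:R)); last first.
  by move=> i _; rewrite /pattern_dist /sgn_in; case: (i \in V) => /=; ring.
rewrite -natr_sum sum_nat_card; apply/eqP; congr (_%:R); apply: eq_card => i.
by rewrite !inE andb_idl // => /(subsetP sV); rewrite inE.
Qed.

Lemma tight_pattern_dist x j V : tight x j V ->
  \sum_(i in nbhd H j) pattern_dist x V i = 1.
Proof. by case/and3P=> sV _ /eqP; rewrite check_form_pattern_dist // => ?; lra. Qed.

Lemma pattern_dist_ge0 x V i : 0 <= x i <= 1 -> 0 <= pattern_dist x V i.
Proof. by rewrite /pattern_dist => /andP[? ?]; case: ifP => _; lra. Qed.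

Lemma pattern_dist_frac x V i : fractional x i -> 0 < pattern_dist x V i < 1.
Proof. by rewrite /pattern_dist => /andP[? ?]; case: ifP => _; apply/andP; split; lra. Qed.

Lemma pattern_dist_integral x V i : 0 <= x i <= 1 -> ~~ fractional x i ->
  pattern_dist x V i = 0 \/ pattern_dist x V i = 1.
Proof.
move=> /andP[x_ge0 x_le1]; rewrite /fractional negb_and -!leNgt /pattern_dist.
by case/orP=> x01; case: ifP => _; [right|left|left|right]; lra.
Qed.

Lemma tight_two_fractional x j V i1 : (forall i, 0 <= x i <= 1) ->
  tight x j V -> i1 \in nbhd H j -> fractional x i1 ->
  (1 < #|[set i in nbhd H j | fractional x i]|)%N.
Proof.
move=> box tV i1N f1; rewrite ltnNge; apply/negP => card_le1.
have others i : i \in nbhd H j -> i != i1 -> ~~ fractional x i.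
  move=> iN ne; apply: contraTN card_le1 => fi; rewrite -ltnNge; apply/card_gt1P.
  by exists i, i1; move: iN i1N; rewrite !inE => -> ->; rewrite fi f1.
have := tight_pattern_dist tV; rewrite (bigD1 i1) //=.
rewrite (eq_bigr (fun i => (pattern_dist x V i == 1)%:R)); last first.
  move=> i /andP[iN ne].
  by have [->|->] := pattern_dist_integral V (box i) (others i iN ne);
    rewrite ?eqxx // eq_sym oner_eq0.
have /andP[pd_gt0 pd_lt1] := pattern_dist_frac V f1; rewrite -natr_sum.
case: (\sum_(i | _) _)%N => [|k]; first lra.
have : (1 <= k.+1%:R :> R) by rewrite ler1n.
lra.
Qed.

Lemma tight_patterns_aligned x j V V' : (forall i, 0 <= x i <= 1) ->
  tight x j V -> tight x j V' ->
  {in nbhd H j, forall i, fractional x i -> (i \in V) = (i \in V')} \/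
  {in nbhd H j, forall i, fractional x i -> (i \in V) != (i \in V')}.
Proof.
move=> box tV tV'.
have [agree|] := boolP [forall i in nbhd H j, fractional x i ==> ((i \in V) == (i \in V'))].
  by left=> i iN fi; move/forall_inP/(_ i iN): agree; rewrite fi => /eqP.
rewrite negb_forall_in => /existsP[i1 /andP[i1N]]; rewrite negb_imply => /andP[f1 d1].
right=> i2 i2N f2; apply/negP => /eqP s2.
have [/and3P[sV oV _] /and3P[sV' oV' _]] := (tV, tV').
(* D is even, so it has a second element; the sum of both distances is then at
   least #|D| >= 2 on D, plus a positive contribution at the agreeing i2. *)
set D := (V :\: V') :|: (V' :\: V).
have inD i : (i \in D) = ((i \in V) != (i \in V')).
  by rewrite !inE; case: (i \in V); case: (i \in V').
have sD : D \subset nbhd H j.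
  by rewrite subUset (subset_trans (subsetDl V V') sV) (subset_trans (subsetDl V' V) sV').
have D_ge2 : (2 <= #|D|)%N.
  have : ~~ odd #|D| by rewrite odd_card_symdiff oV oV'.
  have : (0 < #|D|)%N by apply/card_gt0P; exists i1; rewrite inD.
  by case: #|D| => [|[|k]].
pose s i := pattern_dist x V i + pattern_dist x V' i.
have sum2 : \sum_(i in nbhd H j) s i = 2 by rewrite big_split /= !tight_pattern_dist.
have sumD : \sum_(i in D) s i = #|D|%:R.
  rewrite -sumr_const; apply: eq_bigr => i; rewrite inD /s /pattern_dist.
  by case: (i \in V); case: (i \in V') => //= _; ring.
have rest : 0 < \sum_(i in nbhd H j :\: D) s i.
  rewrite (bigD1 i2) /=; last by rewrite in_setD inD s2 eqxx i2N.
  have := pattern_dist_frac V f2; have := pattern_dist_ge0 V' (box i2).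
  have : 0 <= \sum_(i in nbhd H j :\: D | i != i2) s i.
    by apply: sumr_ge0 => i _; rewrite addr_ge0 ?pattern_dist_ge0.
  rewrite /s; lra.
move: sum2; rewrite (big_setID D) /= (setIidPr sD) sumD.
have : (2 : R) <= #|D|%:R by rewrite ler_nat.
lra.
Qed.

Lemma tight_check_form_sign x d j V V' : (forall i, 0 <= x i <= 1) ->
  (forall i, ~~ fractional x i -> d i = 0) -> tight x j V -> tight x j V' ->
  check_form j V d = check_form j V' d \/ check_form j V d = - check_form j V' d.
Proof.
move=> box d_frac tV tV'; rewrite /check_form -sumrN.
have [agree|disagree] := tight_patterns_aligned box tV tV'; [left|right];
  apply: eq_bigr => i iN; have [fi|/d_frac->] := boolP (fractional x i);
  rewrite ?mulr0 ?oppr0 //.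
  by rewrite /sgn_in (agree i iN fi).
move: (disagree i iN fi); rewrite /sgn_in.
by case: (i \in V); case: (i \in V') => //= _; ring.
Qed.

Lemma perturbation_feasible x d : in_fund_polytope H x ->
  (forall i, ~~ fractional x i -> d i = 0) ->
  (forall j V, tight x j V -> check_form j V d = 0) ->
  exists2 eps : R, 0 < eps &
    forall t, `|t| <= eps -> in_fund_polytope H (fun i => x i + t * d i).
Proof.
move=> [box px] d_frac d_tight.
pose M := 1 + \sum_i `|d i|.
have sum_le (A : {set 'I_n}) : \sum_(i in A) `|d i| <= M - 1.
  by rewrite /M addrC addKr [leRHS](bigID (mem A)) /= lerDl sumr_ge0.
have M_gt0 : 0 < M by have := sum_le set0; rewrite big_set0; lra.
have d_le i : `|d i| <= M by have := sum_le [set i]; rewrite big_set1; lra.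
have form_le j V : `|check_form j V d| <= M.
  apply: le_trans (ler_norm_sum _ _ _) _.
  under eq_bigr do rewrite normrM /sgn_in (fun_if Num.norm) normrN normr1 if_same mul1r.
  by have := sum_le (nbhd H j); lra.
pose slack (c : 'I_m * {set 'I_n}) := #|c.2|%:R - 1 - check_form c.1 c.2 x.
pose loose (c : 'I_m * {set 'I_n}) := [&& c.2 \subset nbhd H c.1, odd #|c.2| & 0 < slack c].
have [r1 r1_gt0 r1_le] : exists2 r1, 0 < r1 & forall c, loose c -> r1 <= slack c.
  by apply: exists_pos_lower_bound => c /and3P[].
have [r2 r2_gt0 r2_le] : exists2 r2, 0 < r2 &
    forall i, fractional x i -> r2 <= Num.min (x i) (1 - x i).
  by apply: exists_pos_lower_bound => i /andP[? ?]; rewrite lt_min subr_gt0; apply/andP.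
pose r := Num.min r1 r2.
have [r_le1 r_le2] : r <= r1 /\ r <= r2 by rewrite !ge_min !lexx orbT.
exists (r / M) => [|t t_le]; first by rewrite divr_gt0 // lt_min r1_gt0.
have small a : `|a| <= M -> - r <= t * a <= r.
  move=> a_le; rewrite -ler_norml normrM -[r](divfK (lt0r_neq0 M_gt0)).
  exact: ler_pM.
split=> [i | j V sV oV].
  have [fi|/d_frac->] := boolP (fractional x i); last by rewrite mulr0 addr0 box.
  have /andP[lo hi] := small _ (d_le i).
  have := r2_le i fi; rewrite le_min => /andP[? ?].
  apply/andP; split; lra.
have := px j V sV oV; rewrite -!check_formE // check_form_lin => x_le.
have [tV|ntV] := boolP (tight x j V); first by rewrite d_tight // mulr0 addr0.
have looseV : loose (j, V).
  move: ntV; rewrite /tight /loose /slack /= sV oV /= subr_gt0 => ne.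
  by rewrite lt_neqAle ne x_le.
have := r1_le _ looseV; have /andP[lo hi] := small _ (form_le j V).
rewrite /slack /=; lra.
Qed.

Lemma lp_cost_lin gamma x d t :
  lp_cost gamma (fun i => x i + t * d i) = lp_cost gamma x + t * lp_cost gamma d.
Proof. by rewrite /lp_cost mulr_sumr -big_split; apply: eq_bigr => i _ /=; ring. Qed.

Lemma unique_optimum_rigid gamma x d : unique_lp_optimum H gamma x ->
  (forall i, ~~ fractional x i -> d i = 0) ->
  (forall j V, tight x j V -> check_form j V d = 0) ->
  forall i, d i = 0.
Proof.
move=> [px opt uniq] d_frac d_tight i.
have [eps eps_gt0 feas] := perturbation_feasible px d_frac d_tight.
have [up down] : `|eps| <= eps /\ `|- eps| <= eps by rewrite normrN ger0_norm ?(ltW eps_gt0).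
have := opt _ (feas _ up); have := opt _ (feas _ down); rewrite !lp_cost_lin => ? ?.
have same : lp_cost gamma (fun i => x i + eps * d i) = lp_cost gamma x.
  by rewrite lp_cost_lin; lra.
have /eqP := uniq _ (feas _ up) same i.
by rewrite -subr_eq0 addrC addKr mulf_eq0 (gt_eqF eps_gt0) => /eqP.
Qed.
End FundamentalPolytope.
Arguments sgn_in {R n} V i.

Section Cluster.
Variables (R : realFieldType) (m n : nat) (H : 'M[bool]_(m, n)) (x : 'I_n -> R).

Lemma frac_adj_sym : symmetric (frac_adj H x).
Proof. by move=> [i|j] [i'|j']; rewrite /frac_adj /= andbCA. Qed.

Lemma frac_adj_ll i i' : ~~ frac_adj H x (inl i) (inl i').
Proof. by rewrite /frac_adj /= !andbF. Qed.

Lemma frac_adj_rr j j' : ~~ frac_adj H x (inr j) (inr j').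
Proof. by rewrite /frac_adj /= !andbF. Qed.

Variable v : tanner_vertex m n.
Hypothesis v_frac : frac_vertex H x v.

Definition cluster := [set w | connect (frac_adj H x) v w].

Definition cluster_vars := [set i | inl i \in cluster].

Definition tight_checks :=
  [set j | (inr j \in cluster) && [exists V, tight H x j V]].

(* [set0] is a junk value for checks without a tight constraint. *)
Definition tight_set j := odflt set0 [pick V | tight H x j V].

Lemma tight_set_tight j : j \in tight_checks -> tight H x j (tight_set j).
Proof.
rewrite inE /tight_set => /andP[_ /existsP[V tV]].
by case: pickP => [//|/(_ V)]; rewrite tV.
Qed.

Lemma cluster_frac w : w \in cluster -> frac_vertex H x w.
Proof.
rewrite inE => /connectP[p + ->]; case/lastP: p => [//|p z].
by rewrite rcons_path last_rcons => /andP[_ /and3P[]].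
Qed.

Lemma cluster_adj w w' : w \in cluster -> frac_adj H x w w' -> w' \in cluster.
Proof. by rewrite !inE => vw ww'; apply: connect_trans vw (connect1 ww'). Qed.

Lemma cluster_var j i : inr j \in cluster -> H j i -> fractional x i ->
  inl i \in cluster.
Proof.
move=> jK Hji fi; apply: (cluster_adj jK).
by rewrite /frac_adj (cluster_frac jK); apply/and3P.
Qed.

Lemma cluster_check j i : inl i \in cluster -> H j i -> inr j \in cluster.
Proof.
move=> iK Hji; apply: (cluster_adj iK); have fi := cluster_frac iK.
by rewrite /frac_adj fi /= Hji andbT; apply/existsP; exists i; rewrite Hji.
Qed.

Lemma cluster_vars_frac i : i \in cluster_vars -> fractional x i.
Proof. by rewrite inE => /cluster_frac. Qed.

Lemma sum_set_cluster : sum_set cluster_vars tight_checks \subset cluster.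
Proof. by apply/subsetP => -[i|j]; rewrite !inE // => /andP[]. Qed.

Lemma card_cluster_vars_gt0 : (0 < #|cluster_vars|)%N.
Proof.
have vK : v \in cluster by rewrite inE connect0.
case: v v_frac vK => [i _|j /existsP[i /andP[Hji fi]]] vK; apply/card_gt0P.
  by exists i; rewrite inE.
by exists i; rewrite inE (cluster_var vK Hji fi).
Qed.

Variable gamma : 'I_n -> R.
Hypothesis x_opt : unique_lp_optimum H gamma x.

Lemma opt_box i : 0 <= x i <= 1.
Proof. by case: x_opt => [[box _] _ _]. Qed.

Lemma cluster_supported_frac (d : 'I_n -> R) :
  (forall i, i \notin cluster_vars -> d i = 0) ->
  forall i, ~~ fractional x i -> d i = 0.
Proof. by move=> d_W i fi; apply: d_W; apply: contra fi; apply: cluster_vars_frac. Qed.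

Lemma cluster_tight_forms_vanish (d : 'I_n -> R) :
  (forall i, i \notin cluster_vars -> d i = 0) ->
  (forall j, j \in tight_checks -> check_form H j (tight_set j) d = 0) ->
  forall j V, tight H x j V -> check_form H j V d = 0.
Proof.
move=> d_W d_C j V tV.
have [jK|jNK] := boolP (inr j \in cluster).
  have jC : j \in tight_checks by rewrite inE jK; apply/existsP; exists V.
  have [->|->] := tight_check_form_sign opt_box (cluster_supported_frac d_W) tV
    (tight_set_tight jC); by rewrite d_C ?oppr0.
rewrite /check_form big1 // => i iN; rewrite d_W ?mulr0 //.
by apply: contra jNK; rewrite inE => /cluster_check; apply; rewrite inE in iN.
Qed.

Lemma card_cluster_vars_le_tight_checks : (#|cluster_vars| <= #|tight_checks|)%N.
Proof.
rewrite leqNgt; apply/negP => lt_CW.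
pose row c i : R := match c with
  | inl k => (k == i)%:R
  | inr j => if i \in nbhd H j then sgn_in (tight_set j) i else 0
  end.
have [|d [[i0 d_i0] d_row]] :=
  underdetermined_system (P := sum_set (~: cluster_vars) tight_checks) row.
  by rewrite card_sum_set; have := cardsC cluster_vars; rewrite card_ord; lia.
have d_W i : i \notin cluster_vars -> d i = 0.
  move=> iW; have := d_row (inl i); rewrite inE in_setC iW => /(_ isT).
  rewrite (bigD1 i) //= eqxx mul1r big1 ?addr0 // => k ki.
  by rewrite eq_sym (negbTE ki) mul0r.
have d_C j : j \in tight_checks -> check_form H j (tight_set j) d = 0.
  move=> jC; have := d_row (inr j); rewrite inE jC => /(_ isT) row0.
  rewrite -[RHS]row0 /check_form big_mkcond /=; apply: eq_bigr => i _.
  by case: ifP; rewrite ?mul0r.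
have := unique_optimum_rigid x_opt (cluster_supported_frac d_W)
  (cluster_tight_forms_vanish d_W d_C) i0.
by move/eqP: d_i0.
Qed.

Lemma tight_check_deg_ge2 j : j \in tight_checks ->
  (2 <= deg_in (frac_adj H x) (sum_set cluster_vars tight_checks) (inr j))%N.
Proof.
move=> jC; have := jC; rewrite inE => /andP[jK _].
have /existsP[i1 /andP[Hji1 f1]] := cluster_frac jK.
rewrite deg_in_inr; last exact: frac_adj_rr.
apply: leq_trans (tight_two_fractional opt_box (tight_set_tight jC) _ f1) _.
  by rewrite inE.
apply/subset_leq_card/subsetP => i; rewrite !inE => /andP[Hji fi].
have := cluster_var jK Hji fi; rewrite inE => ->.
by rewrite /= /frac_adj (cluster_frac jK); apply/and3P.
Qed.
End Cluster.

Theorem theorem4 (R : realFieldType) (m n : nat) (H : 'M[bool]_(m, n))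
  (gamma x : 'I_n -> R) :
  unique_lp_optimum H gamma x ->
  forall v : tanner_vertex m n, frac_vertex H x v -> cluster_has_cycle H x v.
Proof.
move=> x_opt v v_frac.
have : has_cycle_in (frac_adj H x) (sum_set (cluster_vars H x v) (tight_checks H x v)).
  apply: bipartite_cycle.
  - exact: frac_adj_sym.
  - exact: frac_adj_ll.
  - exact: frac_adj_rr.
  - exact: card_cluster_vars_gt0.
  - exact: card_cluster_vars_le_tight_checks x_opt.
  - exact: tight_check_deg_ge2 x_opt.
case=> s [s3 s_uniq s_cycle s_sub]; exists s; split=> //.
by apply/allP => w /s_sub /(subsetP (sum_set_cluster H x v)); rewrite inE.
Qed.
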